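(* Let $i\ge1$, $j\ge 1$ and $n\ge0$ be integers. If $2^{i-1}<d_j(n)\le 2^i$, then $d_j(n)=d_{i+1}(n)$. Furthermore, $2^{i-1}<d_{i+1}(n)\le 2^i$ if and only if $-2^{i-1}<(n\bmod 2^{i+1})-2^i<2^{i-1}$.
   Context: For $i\in\mathbb{N}$ and $n\in\mathbb{N}_0$, $d_i(n)=2^{i-1}-\left|(n\bmod 2^i)-2^{i-1}\right|$. *)

From Stdlib Require Import ZArith.
Open Scope Z_scope.

Definition d (i : Z) (n : Z) : Z :=
  2 ^ (i - 1) - Z.abs ((n mod 2 ^ i) - 2 ^ (i - 1)).

From Stdlib Require Import ZArith Lia.
Open Scope Z_scope.

(* [d j n] is the distance from [n] to the nearest multiple of [2^j].  A
   distance to [2^j Z] that is at most [2^(k-1)] is realised by the same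
   multiple for the coarser lattice [2^k Z] (k <= j), so [d j n = d k n].
   In the theorem [d j n > 2^(i-1)] forces [j > i], and [d j n <= 2^i]
   then gives [d j n = d (i+1) n]. *)

Lemma pow2_pred (k : Z) : 1 <= k -> 2 ^ k = 2 * 2 ^ (k - 1).
Proof.
  intros hk; rewrite <- Z.pow_succ_r by lia; f_equal; lia.
Qed.

Lemma d_le_half (j n : Z) : d j n <= 2 ^ (j - 1).
Proof.
  unfold d; lia.
Qed.

(* The residue [r] modulo [2hK] is within [h] of [0] or of [2hK]; in both
   cases reducing it modulo [2h] keeps its distance to the endpoints. *)
Lemma dist_mod_refine (h K r : Z) :
  0 < h -> 0 < K -> 0 <= r < 2 * h * K ->
  h * K - Z.abs (r - h * K) <= h ->
  h * K - Z.abs (r - h * K) = h - Z.abs (r mod (2 * h) - h).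
Proof.
  intros hh hK hr hclose.
  destruct (Z_le_gt_dec r (h * K)) as [hlow | hhigh].
  - assert (hsmall : r <= h) by lia.
    rewrite Z.mod_small by lia; lia.
  - assert (hq : r mod (2 * h) = r - 2 * h * (K - 1)).
    { symmetry; apply Z.mod_unique with (q := K - 1); nia. }
    rewrite hq; nia.
Qed.

Lemma d_refine (j k n : Z) :
  1 <= k <= j -> d j n <= 2 ^ (k - 1) -> d j n = d k n.
Proof.
  intros hkj hclose.
  set (h := 2 ^ (k - 1)) in *.
  set (K := 2 ^ (j - k)).
  assert (hh : 0 < h) by (apply Z.pow_pos_nonneg; lia).
  assert (hK : 0 < K) by (apply Z.pow_pos_nonneg; lia).
  assert (hjhalf : 2 ^ (j - 1) = h * K).
  { unfold h, K; rewrite <- Z.pow_add_r by lia; f_equal; lia. }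
  assert (hj : 2 ^ j = 2 * h * K) by (rewrite pow2_pred, hjhalf by lia; lia).
  assert (hk : 2 ^ k = 2 * h) by (apply pow2_pred; lia).
  unfold d in hclose |- *; fold h in hclose |- *.
  rewrite hjhalf, hj in hclose; rewrite hjhalf, hj, hk.
  assert (hmod : n mod (2 * h) = (n mod (2 * h * K)) mod (2 * h)).
  { symmetry; apply Z.mod_mod_divide; exists K; lia. }
  rewrite hmod.
  apply dist_mod_refine; try apply Z.mod_pos_bound; nia.
Qed.

Theorem lemma14 (i j n : Z) (hi : 1 <= i) (hj : 1 <= j) (hn : 0 <= n) :
  (2 ^ (i - 1) < d j n <= 2 ^ i -> d j n = d (i + 1) n) /\
  (2 ^ (i - 1) < d (i + 1) n <= 2 ^ i <->
     - 2 ^ (i - 1) < (n mod 2 ^ (i + 1)) - 2 ^ i < 2 ^ (i - 1)).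
Proof.
  split.
  - intros [hlow hup].
    assert (hji : i < j).
    { destruct (Z_lt_le_dec i j) as [| hle]; [assumption|].
      pose proof (d_le_half j n).
      assert (2 ^ (j - 1) <= 2 ^ (i - 1)) by (apply Z.pow_le_mono_r; lia).
      lia. }
    apply d_refine; [lia|].
    now replace (i + 1 - 1) with i by lia.
  - unfold d; replace (i + 1 - 1) with i by lia.
    rewrite (pow2_pred (i + 1)), (pow2_pred i) by lia.
    replace (i + 1 - 1) with i by lia.
    assert (hh : 0 < 2 ^ (i - 1)) by (apply Z.pow_pos_nonneg; lia).
    pose proof (Z.mod_pos_bound n (2 * (2 * 2 ^ (i - 1))) ltac:(lia)).
    lia.
Qed.
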